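(* Let $\mathcal{C}$ be a hereditary class of graphs that has bounded linear clique-width and is $2$-well-quasi-ordered. Then there exists an MSO-interpretation $I$ from finite words to graphs such that $\mathcal{C}\subseteq \mathrm{Im}(I)\subseteq \mathord{\downarrow}\mathcal{C}$, where $\mathord{\downarrow}\mathcal{C}$ denotes the hereditary closure of $\mathcal{C}$.
   Context: Graphs are finite, simple and undirected; $G$ is an induced subgraph of $H$ if there is an injective map $h$ with $\{h(u),h(v)\}\in E(H)$ iff $\{u,v\}\in E(G)$. A class is hereditary if closed under induced subgraphs; the hereditary closure of a class is the class of all induced subgraphs of its members. An MSO-interpretation from words over a finite alphabet $\Sigma$ to graphs is a triple $I=(\varphi_{\mathrm{edge}}(x,y),\varphi_{\mathrm{dom}}(x),\varphi_\Delta)$ of MSO formulas over words (with letter predicates and the order on positions), $\varphi_\Delta$ a sentence. For a word $w$, $I(w)$ is the graph with vertices the positions $i$ of $w$ with $w\models\varphi_{\mathrm{dom}}(i)$ and edges $\{i,j\}$ for $i<j$ with $w\models\varphi_{\mathrm{edge}}(i,j)$; $\mathrm{Im}(I)=\{I(w): w\in\Sigma^*, w\models\varphi_\Delta\}$. A class $\mathcal{C}$ has bounded linear clique-width if $\mathcal{C}\subseteq\mathrm{Im}(I)$ for some MSO-interpretation $I$. A class is $2$-well-quasi-ordered if for every set $X$ of size at most $2$, the class of graphs of $\mathcal{C}$ with vertices labelled by $X$ is well-quasi-ordered by label-preserving induced-subgraph embeddings. *)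

From mathcomp Require Import all_boot.
Set Implicit Arguments. Unset Strict Implicit. Unset Printing Implicit Defensive.

Record graph := Graph {
  vert : finType;
  adj : rel vert;
  adj_sym : symmetric adj;
  adj_irr : irreflexive adj }.

Definition induced (G H : graph) : Prop :=
  exists h : vert G -> vert H,
    injective h /\ forall u v : vert G, adj (h u) (h v) = adj u v.

Definition hereditary (C : graph -> Prop) : Prop :=
  forall G H : graph, induced G H -> C H -> C G.

Definition down (C : graph -> Prop) (G : graph) : Prop :=
  exists H, C H /\ induced G H.

Definition lgraph (X : Type) := {G : graph & vert G -> X}.

Definition lembed (X : Type) (A B : lgraph X) : Prop :=
  exists h : vert (projT1 A) -> vert (projT1 B),
    injective h /\
    (forall u v, adj (h u) (h v) = adj u v) /\
    (forall u, projT2 B (h u) = projT2 A u).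

Definition k_wqo (k : nat) (C : graph -> Prop) : Prop :=
  forall (X : finType), #|X| <= k ->
  forall f : nat -> lgraph X, (forall n, C (projT1 (f n))) ->
  exists i j, i < j /\ lembed (f i) (f j).

Inductive mso (S : Type) : Type :=
| MLetter of S & nat
| MLt of nat & nat
| MMem of nat & nat
| MNeg of mso S
| MOr of mso S & mso S
| MExFO of nat & mso S
| MExSO of nat & mso S.

Definition upd (T : Type) (v : nat -> T) (x : nat) (t : T) : nat -> T :=
  fun z => if z == x then t else v z.

Fixpoint sat (S : Type) (w : seq S) (v1 : nat -> nat) (v2 : nat -> nat -> bool)
    (phi : mso S) : Prop :=
  match phi with
  | MLetter a x => onth w (v1 x) = Some a
  | MLt x y => v1 x < v1 y
  | MMem x X => v2 X (v1 x)
  | MNeg p => ~ sat w v1 v2 p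
  | MOr p q => sat w v1 v2 p \/ sat w v1 v2 q
  | MExFO x p => exists i, i < size w /\ sat w (upd v1 x i) v2 p
  | MExSO X p => exists P : nat -> bool, sat w v1 (upd v2 X P) p
  end.

Fixpoint scoped (S : Type) (fo so : pred nat) (phi : mso S) : bool :=
  match phi with
  | MLetter _ x => fo x
  | MLt x y => fo x && fo y
  | MMem x X => fo x && so X
  | MNeg p => scoped fo so p
  | MOr p q => scoped fo so p && scoped fo so q
  | MExFO x p => scoped [pred z | (z == x) || fo z] so p
  | MExSO X p => scoped fo [pred Z | (Z == X) || so Z] p
  end.

(** An MSO-interpretation (phi_edge(x,y), phi_dom(x), phi_Delta):
    x is variable 0, y is variable 1; phi_Delta is a sentence. *)
Record interp (S : finType) := Interp {
  phi_edge : mso S;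
  phi_dom : mso S;
  phi_delta : mso S;
  phi_edge_sc : scoped [pred z | z < 2] pred0 phi_edge;
  phi_dom_sc : scoped [pred z | z == 0] pred0 phi_dom;
  phi_delta_sc : scoped pred0 pred0 phi_delta }.

Definition val2 (i j : nat) : nat -> nat :=
  fun z => if z == 0 then i else if z == 1 then j else 0.

Definition noset : nat -> nat -> bool := fun _ _ => false.

Definition in_dom (S : finType) (I : interp S) (w : seq S) (i : nat) : Prop :=
  i < size w /\ sat w (val2 i 0) noset (phi_dom I).

Definition in_edge (S : finType) (I : interp S) (w : seq S) (i j : nat) : Prop :=
  (i < j /\ sat w (val2 i j) noset (phi_edge I)) \/
  (j < i /\ sat w (val2 j i) noset (phi_edge I)).

Definition iso_image (S : finType) (I : interp S) (w : seq S) (G : graph) : Prop :=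
  exists f : vert G -> nat,
    injective f /\
    (forall v, in_dom I w (f v)) /\
    (forall i, in_dom I w i -> exists v, f v = i) /\
    (forall u v, adj u v <-> in_edge I w (f u) (f v)).

Definition in_Im (S : finType) (I : interp S) (G : graph) : Prop :=
  exists w : seq S, sat w (fun _ => 0) noset (phi_delta I) /\ iso_image I w G.

Definition bounded_lcw (C : graph -> Prop) : Prop :=
  exists (S : finType) (I : interp S), forall G, C G -> in_Im I G.

From mathcomp Require Import all_boot zify.
From Stdlib Require Import Classical ClassicalEpsilon FunctionalExtensionality.
Set Implicit Arguments. Unset Strict Implicit. Unset Printing Implicit Defensive.

(* Since C is 2-well-quasi-ordered, its minimal non-members have bounded size:
   otherwise take minimal non-members H_0, H_1, ... of strictly increasing
   size, delete a vertex v_k from each and label the rest by adjacency to v_k.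
   These labelled graphs lie in C, so one of them embeds in a later one; the
   embedding extends by v_i |-> v_j to an embedding of H_i into H_j, and then
   H_i is in C by minimality of H_j.  Hence, for hereditary C, membership is
   the absence of finitely many forbidden induced subgraphs.  Each of them
   being present in I(w) is an MSO property of w, so conjoining their
   negations to phi_Delta cuts Im(I) down into C. *)

Section MsoSyntax.

Variable S : Type.
Implicit Types (w : seq S) (phi psi : mso S) (fo so : pred nat).

Fixpoint rename (r : nat -> nat) phi : mso S :=
  match phi with
  | MLetter a x => MLetter a (r x)
  | MLt x y => MLt S (r x) (r y)
  | MMem x X => MMem S (r x) X
  | MNeg p => MNeg (rename r p)
  | MOr p q => MOr (rename r p) (rename r q)
  | MExFO x p => MExFO (r x) (rename r p)
  | MExSO X p => MExSO X (rename r p)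
  end.

Lemma upd_comp (T : Type) (r : nat -> nat) (v : nat -> T) x t :
  injective r -> upd v (r x) t \o r = upd (v \o r) x t.
Proof. by move=> r_inj; apply: functional_extensionality => z; rewrite /upd /= (inj_eq r_inj). Qed.

Lemma sat_rename w r phi v1 v2 : injective r ->
  sat w v1 v2 (rename r phi) <-> sat w (v1 \o r) v2 phi.
Proof.
move=> r_inj; elim: phi v1 v2 => //= [p IH | p IHp q IHq | x p IH | X p IH] v1 v2.
- by rewrite IH.
- by rewrite IHp IHq.
- split=> -[i [lt_i sat_i]]; exists i; split=> //; last by rewrite IH upd_comp.
  by move: sat_i; rewrite IH upd_comp.
- by split=> -[P sat_P]; exists P; move: sat_P; rewrite IH.
Qed.

Lemma sat_eq_on_scope w phi fo so v1 v1' v2 v2' : scoped fo so phi ->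
  (forall z, fo z -> v1 z = v1' z) -> (forall X, so X -> v2 X = v2' X) ->
  sat w v1 v2 phi <-> sat w v1' v2' phi.
Proof.
elim: phi fo so v1 v1' v2 v2' => /=
  [a x | x y | x X | p IH | p IHp q IHq | x p IH | X p IH] fo so v1 v1' v2 v2'.
- by move=> fo_x e1 _; rewrite e1.
- by move=> /andP[fo_x fo_y] e1 _; rewrite !e1.
- by move=> /andP[fo_x so_X] e1 e2; rewrite e1 // e2.
- by move=> sc e1 e2; rewrite (IH fo so v1 v1' v2 v2').
- by move=> /andP[scp scq] e1 e2; rewrite (IHp fo so v1 v1' v2 v2') // (IHq fo so v1 v1' v2 v2').
- move=> sc e1 e2.
  have e i : sat w (upd v1 x i) v2 p <-> sat w (upd v1' x i) v2' p.
    apply: (IH _ so _ _ _ _ sc) => // z; rewrite inE /upd => /orP[/eqP->|fo_z].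
      by rewrite eqxx.
    by case: eqP => // _; apply: e1.
  by split=> -[i [lt_i]] /e; exists i.
- move=> sc e1 e2.
  have e P : sat w v1 (upd v2 X P) p <-> sat w v1' (upd v2' X P) p.
    apply: (IH fo _ _ _ _ _ sc) => // Z; rewrite inE /upd => /orP[/eqP->|so_Z].
      by rewrite eqxx.
    by case: eqP => // _; apply: e2.
  by split=> -[P] /e; exists P.
Qed.

Lemma scoped_sub phi fo fo' so : (forall z, fo z -> fo' z) ->
  scoped fo so phi -> scoped fo' so phi.
Proof.
elim: phi fo fo' so => /= [a x | x y | x X | p IH | p IHp q IHq | x p IH | X p IH] fo fo' so sub.
- exact: sub.
- by case/andP=> /sub-> /sub->.
- by case/andP=> /sub->.
- exact: IH.
- by case/andP=> /(IHp _ _ _ sub)-> /(IHq _ _ _ sub)->.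
- by apply: IH => z; rewrite !inE => /orP[->|/sub->]; rewrite ?orbT.
- exact: IH.
Qed.

Lemma scoped_rename r phi fo fo' so : (forall z, fo z -> fo' (r z)) ->
  scoped fo so phi -> scoped fo' so (rename r phi).
Proof.
elim: phi fo fo' so => /= [a x | x y | x X | p IH | p IHp q IHq | x p IH | X p IH] fo fo' so r_fo.
- exact: r_fo.
- by case/andP=> /r_fo-> /r_fo->.
- by case/andP=> /r_fo->.
- exact: IH.
- by case/andP=> /(IHp _ _ _ r_fo)-> /(IHq _ _ _ r_fo)->.
- by apply: IH => z; rewrite !inE => /orP[/eqP->|/r_fo->]; rewrite ?eqxx ?orbT.
- exact: IH.
Qed.

Definition MAnd phi psi := MNeg (MOr (MNeg phi) (MNeg psi)).
Definition MTrue : mso S := MNeg (MExFO 0 (MLt S 0 0)).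
Definition MNeq (x y : nat) : mso S := MOr (MLt S x y) (MLt S y x).
Definition MIffB phi (b : bool) := if b then phi else MNeg phi.

Lemma sat_MOr w v1 v2 phi psi :
  sat w v1 v2 (MOr phi psi) <-> sat w v1 v2 phi \/ sat w v1 v2 psi.
Proof. by []. Qed.

Lemma sat_MAnd w v1 v2 phi psi :
  sat w v1 v2 (MAnd phi psi) <-> sat w v1 v2 phi /\ sat w v1 v2 psi.
Proof. by rewrite /=; tauto. Qed.

Lemma sat_MTrue w v1 v2 : sat w v1 v2 MTrue.
Proof. by move=> /= [i [_]]; rewrite /upd eqxx ltnn. Qed.

Lemma sat_MNeq w v1 v2 x y : sat w v1 v2 (MNeq x y) <-> v1 x != v1 y.
Proof. by rewrite /= neq_ltn; split=> [[]->|/orP[]]; rewrite ?orbT; auto. Qed.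

Lemma sat_MIffB w v1 v2 phi b :
  sat w v1 v2 (MIffB phi b) <-> (sat w v1 v2 phi <-> b).
Proof. by case: b => /=; intuition. Qed.

Lemma scoped_MAnd fo so phi psi :
  scoped fo so phi -> scoped fo so psi -> scoped fo so (MAnd phi psi).
Proof. by move=> /= -> ->. Qed.

Definition MBigAnd (T : finType) (F : T -> mso S) : mso S :=
  foldr (fun t => MAnd (F t)) MTrue (enum T).

Lemma sat_MBigAnd (T : finType) (F : T -> mso S) w v1 v2 :
  sat w v1 v2 (MBigAnd F) <-> forall t, sat w v1 v2 (F t).
Proof.
suff sat_foldr s : sat w v1 v2 (foldr (fun t => MAnd (F t)) MTrue s) <->
    forall t, t \in s -> sat w v1 v2 (F t).
  by rewrite sat_foldr; split=> sat_F t //; apply: sat_F; rewrite mem_enum.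
elim: s => [|t s IH]; first by split=> // _; apply: sat_MTrue.
rewrite [foldr _ _ _]/= sat_MAnd IH; split=> [[sat_t sat_s] t' | sat_F].
  by rewrite inE => /orP[/eqP->|/sat_s].
by split=> [|t' s_t']; apply: sat_F; rewrite inE ?eqxx ?s_t' ?orbT.
Qed.

Lemma scoped_MBigAnd (T : finType) (F : T -> mso S) fo so :
  (forall t, scoped fo so (F t)) -> scoped fo so (MBigAnd F).
Proof. by move=> sc_F; rewrite /MBigAnd; elim: (enum T) => //= t s ->; rewrite sc_F. Qed.

Fixpoint MExists (k : nat) phi : mso S :=
  if k is k'.+1 then MExFO k' (MExists k' phi) else phi.

Lemma upd_prefix (p v : nat -> nat) k i :
  (fun z => if z < k then p z else upd v k i z) =
  (fun z => if z < k.+1 then upd p k i z else v z).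
Proof.
apply: functional_extensionality => z; rewrite /upd.
case: ltngtP => [lt_zk | lt_kz | ->]; last by rewrite ltnSn.
  by rewrite ltnS (ltnW lt_zk).
by rewrite ltnS leqNgt lt_kz.
Qed.

Lemma sat_MExists w v1 v2 k phi :
  sat w v1 v2 (MExists k phi) <-> exists p : nat -> nat,
    (forall i, i < k -> p i < size w) /\
    sat w (fun z => if z < k then p z else v1 z) v2 phi.
Proof.
elim: k v1 => [|k IH] v1 /=.
  by split=> [sat_phi | [p [_]]]; [exists v1|].
split=> [[i [lt_i /IH[p [lt_p]]]] | [p [lt_p]]].
  rewrite upd_prefix => sat_phi; exists (upd p k i); split=> // j.
  by rewrite /upd ltnS leq_eqVlt; case: eqP => // _ /= /lt_p.
rewrite -(_ : upd p k (p k) = p); last first.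
  by apply: functional_extensionality => z; rewrite /upd; case: eqP => [->|].
rewrite -upd_prefix => sat_phi; exists (p k); split; first exact: lt_p.
by apply/IH; exists p; split=> // i lt_ik; apply: lt_p; apply: ltnW.
Qed.

Lemma scoped_MExists k phi fo so :
  scoped [pred z | (z < k) || fo z] so phi -> scoped fo so (MExists k phi).
Proof.
elim: k fo => [|k IH] fo /=; first by apply: scoped_sub => z; rewrite inE.
move=> sc; apply: IH; apply: scoped_sub sc => z; rewrite !inE ltnS leq_eqVlt.
by case/orP=> [/orP[->|->]|->]; rewrite ?orbT.
Qed.

End MsoSyntax.

Arguments MTrue {S}.

Lemma in_edge_irr (S : finType) (I : interp S) w i : ~ in_edge I w i i.
Proof. by rewrite /in_edge ltnn; case=> -[]. Qed.

Section Interpretation.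

Variables (S : finType) (I : interp S).
Implicit Types (w : seq S) (G H : graph).

(* Instantiations of phi_dom and phi_edge at the variables a (and b) < n; their
   other, bound, variables are shifted beyond n so that they are not captured. *)
Definition subst1 n a z := if z == 0 then a else z + n.
Definition subst2 n a b z := if z == 0 then a else if z == 1 then b else z + n.

Lemma subst1_inj n a : a < n -> injective (subst1 n a).
Proof. by move=> lt_a [|x] [|y]; rewrite /subst1 /=; lia. Qed.

Lemma subst2_inj n a b : a < n -> b < n -> a != b -> injective (subst2 n a b).
Proof. by move=> lt_a lt_b /eqP neq [|[|x]] [|[|y]]; rewrite /subst2 /=; lia. Qed.

Definition dom_at n a : mso S := rename (subst1 n a) (phi_dom I).

Definition edge_at n a b : mso S :=
  MOr (MAnd (MLt S a b) (rename (subst2 n a b) (phi_edge I)))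
      (MAnd (MLt S b a) (rename (subst2 n b a) (phi_edge I))).

Lemma sat_dom_at w v v2 n a : a < n ->
  sat w v v2 (dom_at n a) <-> sat w (val2 (v a) 0) noset (phi_dom I).
Proof.
move=> lt_a; rewrite sat_rename; last exact: subst1_inj.
by apply: sat_eq_on_scope (phi_dom_sc I) _ _ => // z /eqP->.
Qed.

Lemma sat_edge_at w v v2 n a b : a < n -> b < n -> a != b ->
  sat w v v2 (edge_at n a b) <-> in_edge I w (v a) (v b).
Proof.
move=> lt_a lt_b neq_ab.
have sat_edge x y : x < n -> y < n -> x != y ->
    sat w v v2 (rename (subst2 n x y) (phi_edge I)) <->
    sat w (val2 (v x) (v y)) noset (phi_edge I).
  move=> lt_x lt_y neq_xy; rewrite sat_rename; last exact: subst2_inj.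
  by apply: sat_eq_on_scope (phi_edge_sc I) _ _ => // -[|[|z]].
by rewrite sat_MOr !sat_MAnd /= !sat_edge // eq_sym.
Qed.

Lemma scoped_dom_at n a : a < n -> scoped [pred z | z < n] pred0 (dom_at n a).
Proof. by move=> lt_a; apply: scoped_rename (phi_dom_sc I) => z /eqP->. Qed.

Lemma scoped_edge_at n a b : a < n -> b < n ->
  scoped [pred z | z < n] pred0 (edge_at n a b).
Proof.
move=> lt_a lt_b; rewrite /= lt_a lt_b /=.
by apply/andP; split; apply: scoped_rename (phi_edge_sc I) => -[|[|z]].
Qed.

Definition embeds_image w G : Prop :=
  exists p : vert G -> nat, [/\ injective p, forall u, in_dom I w (p u)
    & forall u v, adj u v <-> in_edge I w (p u) (p v)].

Definition contains G : mso S :=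
  let n := #|vert G| in
  let x (u : vert G) : nat := enum_rank u in
  MExists n (MAnd (MBigAnd (fun u => dom_at n (x u)))
    (MBigAnd (fun u => MBigAnd (fun v => if u == v then MTrue else
       MAnd (MNeq S (x u) (x v)) (MIffB (edge_at n (x u) (x v)) (adj u v)))))).

Lemma sat_contains w v1 v2 G :
  sat w v1 v2 (contains G) <-> embeds_image w G.
Proof.
have rank_neq (u v : vert G) : u != v -> (enum_rank u : nat) != enum_rank v.
  by apply: contra => /eqP/ord_inj/enum_rank_inj->.
rewrite sat_MExists; split=> [[p [lt_p]] | [q [q_inj q_dom q_edge]]].
  set v := fun z => _; rewrite sat_MAnd !sat_MBigAnd => -[dom_ok pair_ok].
  have vE (u : vert G) : v (enum_rank u) = p (enum_rank u) by rewrite /v ltn_ord.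
  have [neq_p edge_p] : (forall u u' : vert G, u != u' -> p (enum_rank u) != p (enum_rank u'))
      /\ (forall u u' : vert G, u != u' ->
             in_edge I w (p (enum_rank u)) (p (enum_rank u')) <-> adj u u').
    split=> u u' neq; have /sat_MBigAnd/(_ u') := pair_ok u;
      rewrite (negbTE neq) sat_MAnd sat_MNeq sat_MIffB sat_edge_at ?rank_neq // !vE;
      by case.
  exists (fun u => p (enum_rank u)); split.
  - by move=> u u' eq_p; case: (eqVneq u u') => // /neq_p; rewrite eq_p eqxx.
  - by move=> u; split; [exact: lt_p | have := dom_ok u; rewrite sat_dom_at // vE].
  - move=> u u'; case: (eqVneq u u') => [<-|neq]; last exact: iff_sym (edge_p _ _ neq).
    by rewrite adj_irr; split=> // /in_edge_irr.
pose p z := if insub z is Some i then q (enum_val (i : 'I_#|vert G|)) else 0.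
have pE (u : vert G) : p (enum_rank u) = q u by rewrite /p valK enum_rankK.
exists p; split=> [i lt_i | ].
  by rewrite /p insubT; case: (q_dom (enum_val (Ordinal lt_i))).
set v := fun z => _; have vE (u : vert G) : v (enum_rank u) = q u by rewrite /v ltn_ord pE.
rewrite sat_MAnd !sat_MBigAnd; split=> [u | u].
  by rewrite sat_dom_at // vE; case: (q_dom u).
apply/sat_MBigAnd => u'; case: (eqVneq u u') => [_|neq]; first exact: sat_MTrue.
rewrite sat_MAnd sat_MNeq sat_MIffB sat_edge_at ?rank_neq // !vE.
by split; [apply: contra neq => /eqP/q_inj->|apply: iff_sym].
Qed.

Lemma scoped_contains G : scoped pred0 pred0 (contains G).
Proof.
apply: scoped_MExists; apply: (@scoped_sub _ _ [pred z | z < #|vert G|]).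
  by move=> z /= ->.
apply: scoped_MAnd; apply: scoped_MBigAnd => u; first exact: scoped_dom_at.
apply: scoped_MBigAnd => v; case: eqP => // _.
apply: scoped_MAnd; first by rewrite /= !ltn_ord.
by rewrite /MIffB; case: adj; apply: scoped_edge_at; apply: ltn_ord.
Qed.

Lemma embeds_image_induced w G H :
  induced H G -> iso_image I w G -> embeds_image w H.
Proof.
move=> [h [h_inj h_adj]] [f [f_inj [f_dom [_ f_edge]]]].
exists (f \o h); split=> [|u|u v]; first exact: inj_comp.
  exact: f_dom.
by rewrite -h_adj; apply: f_edge.
Qed.

Lemma induced_of_embeds_image w G H :
  embeds_image w H -> iso_image I w G -> induced H G.
Proof.
move=> [p [p_inj p_dom p_edge]] [f [_ [_ [f_onto f_edge]]]].
have [q qE] : exists q : vert H -> vert G, forall u, f (q u) = p u.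
  by apply: (fin_all_exists (P := fun u (x : vert G) => f x = p u)) => u; apply: f_onto.
exists q; split=> [u u' eq_q | u u'].
  by apply: p_inj; rewrite -!qE eq_q.
apply/idP/idP => [/f_edge | /p_edge].
  by rewrite !qE => /p_edge.
by rewrite -!qE => /f_edge.
Qed.

Definition excludes (T : finType) (bad : T -> Prop) (G : T -> graph) : mso S :=
  MBigAnd (fun t => if excluded_middle_informative (bad t)
                    then MNeg (contains (G t)) else MTrue).

Lemma sat_excludes (T : finType) (bad : T -> Prop) (G : T -> graph) w v1 v2 :
  sat w v1 v2 (excludes bad G) <-> forall t, bad t -> ~ embeds_image w (G t).
Proof.
rewrite sat_MBigAnd; split=> excl t.
  by have := excl t; case: excluded_middle_informative => //= _; rewrite sat_contains.
case: excluded_middle_informative => [bad_t | _] /=; last exact: sat_MTrue.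
by rewrite sat_contains; apply: excl.
Qed.

Lemma scoped_excludes (T : finType) (bad : T -> Prop) (G : T -> graph) :
  scoped pred0 pred0 (excludes bad G).
Proof.
apply: scoped_MBigAnd => t.
by case: excluded_middle_informative => _ //=; apply: scoped_contains.
Qed.

Definition restrict_interp (psi : mso S) (psi_sc : scoped pred0 pred0 psi) :=
  Interp (phi_edge_sc I) (phi_dom_sc I) (scoped_MAnd (phi_delta_sc I) psi_sc).

Lemma in_Im_restrict psi (psi_sc : scoped pred0 pred0 psi) G :
  in_Im (restrict_interp psi_sc) G <-> exists w, [/\
    sat w (fun _ => 0) noset (phi_delta I), sat w (fun _ => 0) noset psi
    & iso_image I w G].
Proof.
have deltaE w : sat w (fun _ => 0) noset (phi_delta (restrict_interp psi_sc)) <->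
    sat w (fun _ => 0) noset (phi_delta I) /\ sat w (fun _ => 0) noset psi.
  exact: sat_MAnd.
split=> -[w]; first by rewrite deltaE => -[[? ?] ?]; exists w.
by case=> ? ? ?; exists w; rewrite deltaE.
Qed.

End Interpretation.

Lemma induced_refl G : induced G G.
Proof. by exists id; split. Qed.

Lemma induced_trans G H K : induced G H -> induced H K -> induced G K.
Proof.
move=> [h [h_inj h_adj]] [k [k_inj k_adj]]; exists (k \o h).
by split=> [|u v /=]; [exact: inj_comp | rewrite k_adj h_adj].
Qed.

Section AdjacencyGraph.

Variables (n : nat) (A : {ffun 'I_n * 'I_n -> bool}).

(* A need not be a symmetric matrix with zero diagonal, so it is made one. *)
Definition adjacency_rel : rel 'I_n := fun i j => [&& i != j, A (i, j) & A (j, i)].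

Lemma adjacency_rel_sym : symmetric adjacency_rel.
Proof. by move=> i j; rewrite /adjacency_rel eq_sym andbA andbAC -andbA. Qed.

Lemma adjacency_rel_irr : irreflexive adjacency_rel.
Proof. by move=> i; rewrite /adjacency_rel eqxx. Qed.

Definition adjacency_graph := Graph adjacency_rel_sym adjacency_rel_irr.

End AdjacencyGraph.

Definition pattern N := {n : 'I_N.+1 & {ffun 'I_n * 'I_n -> bool}}.

Definition pattern_graph N (P : pattern N) : graph := adjacency_graph (projT2 P).

Lemma pattern_of_graph N G : #|vert G| <= N ->
  exists P : pattern N, induced G (pattern_graph P) /\ induced (pattern_graph P) G.
Proof.
move=> le_GN.
pose A := [ffun ij : 'I_#|vert G| * 'I_#|vert G| => adj (enum_val ij.1) (enum_val ij.2)].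
have adjE u v : adjacency_rel A (enum_rank u) (enum_rank v) = adj u v.
  rewrite /adjacency_rel !ffunE /= !enum_rankK (inj_eq enum_rank_inj) adj_sym andbb.
  by case: eqVneq => [->|]; rewrite ?adj_irr.
exists (existT _ (Ordinal (le_GN : #|vert G| < N.+1)) A); split.
  by exists enum_rank; split; [exact: enum_rank_inj | exact: adjE].
exists enum_val; split=> [|i j]; first exact: enum_val_inj.
by rewrite -adjE /= !enum_valK.
Qed.

Definition minimal_nonmember (C : graph -> Prop) H :=
  ~ C H /\ forall G, induced G H -> #|vert G| < #|vert H| -> C G.

Lemma minimal_nonmember_below C G : ~ C G ->
  exists H, minimal_nonmember C H /\ induced H G.
Proof.
have [n] := ubnP #|vert G|; elim: n G => // n IH G le_Gn notCG.
have [Gmin | notmin] := classic (minimal_nonmember C G).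
  by exists G; split; last exact: induced_refl.
have [G' [G'G lt_G'G notCG']] :
    exists G', [/\ induced G' G, #|vert G'| < #|vert G| & ~ C G'].
  apply: NNPP => none; apply: notmin; split=> // G' G'G lt_G'G.
  by apply: NNPP => notCG'; apply: none; exists G'.
have [H [Hmin HG']] := IH G' (leq_trans lt_G'G le_Gn) notCG'.
by exists H; split; last exact: induced_trans G'G.
Qed.

Section VertexDeletion.

Variables (H : graph) (v : vert H).

Definition del_rel : rel {u : vert H | u != v} := fun a b => adj (val a) (val b).

Lemma del_rel_sym : symmetric del_rel.
Proof. by move=> a b; apply: adj_sym. Qed.

Lemma del_rel_irr : irreflexive del_rel.
Proof. by move=> a; apply: adj_irr. Qed.

Definition del := Graph del_rel_sym del_rel_irr.

Definition ldel : lgraph bool := existT _ del (fun u : vert del => adj v (val u)).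

Lemma del_induced : induced del H.
Proof. by exists val; split=> //; apply: val_inj. Qed.

Lemma card_del : #|vert del| < #|vert H|.
Proof.
rewrite /= card_sig (cardD1 v [pred x | true]) inE add1n ltnS.
by apply: subset_leq_card; apply/subsetP => u; rewrite !inE andbT.
Qed.

End VertexDeletion.

Lemma induced_of_lembed_ldel H H' (v : vert H) (v' : vert H') :
  lembed (ldel v) (ldel v') -> induced H H'.
Proof.
move=> [h [h_inj [h_adj h_lab]]].
pose ext u := if insub u is Some s then val (h s) else v'.
have ext_neq s : val (h s) != v' := valP (h s).
exists ext; split=> [u1 u2 | u1 u2]; rewrite /ext;
  case: insubP => [s1 _ <-|/negPn/eqP->]; case: insubP => [s2 _ <-|/negPn/eqP->] //.
- by move/val_inj/h_inj->.
- by move=> eq_v; have := ext_neq s1; rewrite eq_v eqxx.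
- by move=> eq_v; have := ext_neq s2; rewrite -eq_v eqxx.
- exact: h_adj.
- by rewrite adj_sym [in RHS]adj_sym; apply: h_lab.
- exact: h_lab.
- by rewrite !adj_irr.
Qed.

Lemma increasing_of_unbounded (T : Type) (P : T -> Prop) (sz : T -> nat) :
  (forall N, exists x, P x /\ N < sz x) ->
  exists f : nat -> T, (forall k, P (f k)) /\ {homo sz \o f : i j / i < j}.
Proof.
move=> unbounded; have [g gP] := choice _ unbounded.
exists (fun k => iter k (fun x => g (sz x)) (g 0)); split; first by case=> [|k]; apply: (gP _).1.
by apply: homo_ltn ltn_trans _ => k; apply: (gP _).2.
Qed.

Lemma minimal_nonmember_bounded C : k_wqo 2 C ->
  exists N, forall H, minimal_nonmember C H -> #|vert H| <= N.
Proof.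
move=> C_wqo; apply: NNPP => unbounded.
have big N : exists q : {H : graph & vert H},
    minimal_nonmember C (projT1 q) /\ N < #|vert (projT1 q)|.
  apply: NNPP => none; apply: unbounded; exists N => H Hmin; rewrite leqNgt.
  apply/negP => lt_NH; have [v _] : exists v, v \in vert H by apply/card_gt0P; exact: leq_ltn_trans (leq0n N) lt_NH.
  by apply: none; exists (existT _ H v).
have [f [f_min f_incr]] := increasing_of_unbounded big.
have [i [j [lt_ij /induced_of_lembed_ldel fi_fj]]] :
    exists i j, i < j /\ lembed (ldel (projT2 (f i))) (ldel (projT2 (f j))).
  apply: (C_wqo _ _ (fun k => ldel (projT2 (f k)))) => [|k]; first by rewrite card_bool.
  by apply: (f_min k).2; [exact: del_induced | exact: card_del].
by apply: (f_min i).1; apply: (f_min j).2 fi_fj (f_incr i j lt_ij).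
Qed.

Theorem lemma2p2 (C : graph -> Prop) :
  hereditary C -> bounded_lcw C -> k_wqo 2 C ->
  exists (S : finType) (I : interp S),
    (forall G, C G -> in_Im I G) /\ (forall G, in_Im I G -> down C G).
Proof.
move=> C_hered [S [I C_Im]] /minimal_nonmember_bounded[N small].
pose bad (P : pattern N) := ~ C (pattern_graph P).
exists S, (restrict_interp I (scoped_excludes I bad (@pattern_graph N))); split.
  move=> G CG; have [w [delta_w iso_w]] := C_Im G CG.
  apply/in_Im_restrict; exists w; split=> //; apply/sat_excludes => P badP emb.
  exact/badP/(C_hered _ _ _ CG)/(induced_of_embeds_image emb iso_w).
move=> G /in_Im_restrict[w [_ /sat_excludes avoid iso_w]].
exists G; split; last exact: induced_refl.
apply: NNPP => /minimal_nonmember_below[H [Hmin HG]].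
have [P [HP PH]] := pattern_of_graph (small H Hmin).
apply: (avoid P); first by move/(C_hered _ _ HP); apply: Hmin.1.
exact: embeds_image_induced (induced_trans PH HG) iso_w.
Qed.
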